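(* Let $\lambda\in(\frac16,\frac56)$ and $n\ge0$. For all $x\in[0,1]\setminus\mathcal E$, $$|F^\lambda(x)-F^\lambda(a_n(x))|\ge|m_n(x)|\,|x-a_n(x)|.$$
   Context: Construction: $F^\lambda_0\equiv0$ on $[0,1]$. Given $F^\lambda_n$ with its $4^n$ closed intervals of generation $n$ (covering $[0,1]$, disjoint interiors, $F^\lambda_n$ affine on each), on each interval $[a,b]$ of generation $n$, with $\ell=b-a$ and slope $m$, $F^\lambda_{n+1}$ coincides with $F^\lambda_n$ at $a,a+\ell/3,a+2\ell/3,b$, equals $F^\lambda_n(a+\ell/2)+\lambda\ell\sqrt{1+m^2}$ at $a+\ell/2$, and is affine on $[a,a+\ell/3],[a+\ell/3,a+\ell/2],[a+\ell/2,a+2\ell/3],[a+2\ell/3,b]$. $F^\lambda=\lim_nF^\lambda_n$. Dynamics: $T(x)=3x$ on $[0,\frac13)$, $6x-2$ on $[\frac13,\frac12)$, $4-6x$ on $[\frac12,\frac23)$, $3x-2$ on $[\frac23,1]$; $U(x)=0,1,2,3$ and $\widetilde U(x)=0,\frac13,\frac23,\frac23$ on these intervals respectively; $u_n(x)=U(T^nx)$, $\widetilde u_n(x)=\widetilde U(T^nx)$; $\beta_i(x,n)=\#\{k<n:u_k(x)=i\}$, $\beta_{i,j}=\beta_i+\beta_j$; $\varepsilon_n(x)=(-1)^{\beta_2(x,n)}$, $\ell_n(x)=3^{-\beta_{0,3}(x,n)}6^{-\beta_{1,2}(x,n)}$, $a_0(x)=0$, $a_n(x)=\sum_{k=0}^{n-1}\widetilde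 u_k(x)\varepsilon_k(x)\ell_k(x)$. $\mathcal E$ is the set of $x$ whose digit sequence is eventually constantly $0$ or eventually constantly $3$; for $x\notin\mathcal E$, $m_n(x)$ is the slope of $F^\lambda_n$ at $x$. *)

From Stdlib Require Import Reals Lra.
From Coquelicot Require Import Coquelicot.
Open Scope R_scope.

Definition T (x : R) : R :=
  if Rlt_dec x (1/3) then 3 * x
  else if Rlt_dec x (1/2) then 6 * x - 2
  else if Rlt_dec x (2/3) then 4 - 6 * x
  else 3 * x - 2.

Definition U (x : R) : nat :=
  if Rlt_dec x (1/3) then 0%nat
  else if Rlt_dec x (1/2) then 1%nat
  else if Rlt_dec x (2/3) then 2%nat
  else 3%nat.

Definition Ut (x : R) : R :=
  if Rlt_dec x (1/3) then 0
  else if Rlt_dec x (1/2) then 1/3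
  else if Rlt_dec x (2/3) then 2/3
  else 2/3.

Fixpoint Titer (n : nat) (x : R) : R :=
  match n with O => x | S k => T (Titer k x) end.

Definition u (n : nat) (x : R) : nat := U (Titer n x).
Definition ut (n : nat) (x : R) : R := Ut (Titer n x).

Fixpoint beta (i : nat) (x : R) (n : nat) : nat :=
  match n with
  | O => O
  | S k => (beta i x k + (if Nat.eqb (u k x) i then 1 else 0))%nat
  end.

Definition beta2 (i j : nat) (x : R) (n : nat) : nat := (beta i x n + beta j x n)%nat.

Definition eps (n : nat) (x : R) : R := (-1) ^ (beta 2 x n).

Definition ell (n : nat) (x : R) : R :=
  / (3 ^ (beta2 0 3 x n)) * / (6 ^ (beta2 1 2 x n)).

Fixpoint a (n : nat) (x : R) : R :=
  match n with
  | O => 0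
  | S k => a k x + ut k x * eps k x * ell k x
  end.

Definition inE (x : R) : Prop :=
  (exists N, forall k, (N <= k)%nat -> u k x = 0%nat) \/
  (exists N, forall k, (N <= k)%nat -> u k x = 3%nat).

(* cell n x = (left endpoint, length) of the closed interval of generation n
   containing x: generation 0 is [0,1], and each interval [a,a+l] of
   generation n is split into [a,a+l/3], [a+l/3,a+l/2], [a+l/2,a+2l/3],
   [a+2l/3,a+l].  (At common endpoints we use a half-open convention; this is
   irrelevant for the values of F_n, which agree there.) *)
Fixpoint cell (n : nat) (x : R) : R * R :=
  match n with
  | O => (0, 1)
  | S k =>
      let (a0, l) := cell k x in
      if Rlt_dec x (a0 + l/3) then (a0, l/3)
      else if Rlt_dec x (a0 + l/2) then (a0 + l/3, l/6)
      else if Rlt_dec x (a0 + 2*l/3) then (a0 + l/2, l/6)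
      else (a0 + 2*l/3, l/3)
  end.

Definition lin (p q vp vq x : R) : R := vp + (vq - vp) / (q - p) * (x - p).

Fixpoint Fn (lam : R) (n : nat) : R -> R :=
  match n with
  | O => fun _ => 0
  | S k => fun x =>
      let f := Fn lam k in
      let (a0, l) := cell k x in
      let m := (f (a0 + l) - f a0) / l in
      let p0 := a0 in let p1 := a0 + l/3 in let p2 := a0 + l/2 in
      let p3 := a0 + 2*l/3 in let p4 := a0 + l in
      let v0 := f p0 in let v1 := f p1 in
      let v2 := f p2 + lam * l * sqrt (1 + m^2) in
      let v3 := f p3 in let v4 := f p4 in
      if Rlt_dec x p1 then lin p0 p1 v0 v1 x
      else if Rlt_dec x p2 then lin p1 p2 v1 v2 x
      else if Rlt_dec x p3 then lin p2 p3 v2 v3 x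
      else lin p3 p4 v3 v4 x
  end.

Definition F (lam x : R) : R := real (Lim_seq (fun n => Fn lam n x)).

(* m_n(x): the slope of F^lambda_n on the generation-n interval containing x
   (well defined for x not in E, which is never an endpoint of such an interval) *)
Definition slope (lam : R) (n : nat) (x : R) : R :=
  let (a0, l) := cell n x in (Fn lam n (a0 + l) - Fn lam n a0) / l.

(* F^lambda_(n+1) - F^lambda_n is a nonnegative tent on each generation-n
   interval, of height lambda times the chord length of F^lambda_n over it, and
   these chord lengths shrink by the factor (1 + 6 lambda)/6 < 1 per generation.
   So F^lambda_n increases to a finite limit, F^lambda >= F^lambda_n, and
   F^lambda = F^lambda_n at the endpoints of the generation-n intervals.
   Following the orbit of x under T, a_n(x) is the endpoint of the
   generation-n interval of x at which the affine F^lambda_n is smaller: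
   since lambda > 1/6, the slope changes sign exactly when eps_n does.  Hence
   F^lambda(x) - F^lambda(a_n x) >= F^lambda_n(x) - F^lambda_n(a_n x)
   = m_n(x) (x - a_n x) >= 0. *)

From Stdlib Require Import Reals Lra.
From Coquelicot Require Import Coquelicot.
(* Imported after Coquelicot, which also defines an [Fn]. *)
Open Scope R_scope.

Lemma cell_S n y c l : cell n y = (c, l) ->
  cell (S n) y =
    if Rlt_dec y (c + l/3) then (c, l/3)
    else if Rlt_dec y (c + l/2) then (c + l/3, l/6)
    else if Rlt_dec y (c + 2*l/3) then (c + l/2, l/6)
    else (c + 2*l/3, l/3).
Proof. intros E. cbn [cell]. rewrite E. reflexivity. Qed.

Lemma cell_S_cases n y c l : cell n y = (c, l) ->
  (y < c + l/3 /\ cell (S n) y = (c, l/3)) \/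
  (c + l/3 <= y < c + l/2 /\ cell (S n) y = (c + l/3, l/6)) \/
  (c + l/2 <= y < c + 2*l/3 /\ cell (S n) y = (c + l/2, l/6)) \/
  (c + 2*l/3 <= y /\ cell (S n) y = (c + 2*l/3, l/3)).
Proof.
  intros E. rewrite (cell_S n y c l E).
  destruct (Rlt_dec y (c + l/3)); [left; auto|].
  destruct (Rlt_dec y (c + l/2)); [right; left; split; [lra|auto]|].
  destruct (Rlt_dec y (c + 2*l/3)); [right; right; left; split; [lra|auto]|].
  right; right; right; split; [lra|auto].
Qed.

Lemma cell_spec n y c l : 0 <= y < 1 -> cell n y = (c, l) ->
  0 <= c /\ 0 < l /\ c <= y < c + l /\ c + l <= 1.
Proof.
  revert c l; induction n as [|n IH]; intros c l Hy E.
  - injection E as <- <-. lra.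
  - destruct (cell n y) as [c0 l0] eqn:E0.
    specialize (IH c0 l0 Hy eq_refl).
    destruct (cell_S_cases n y c0 l0 E0) as [[Hc Ec]|[[Hc Ec]|[[Hc Ec]|[Hc Ec]]]];
      rewrite Ec in E; injection E as <- <-; lra.
Qed.

Lemma cell_constant n y z c l : 0 <= y < 1 -> cell n y = (c, l) -> c <= z < c + l ->
  cell n z = (c, l).
Proof.
  revert c l; induction n as [|n IH]; intros c l Hy E Hz.
  - exact E.
  - destruct (cell n y) as [c0 l0] eqn:E0.
    pose proof (cell_spec n y c0 l0 Hy E0) as B.
    assert (Hz0 : c0 <= z < c0 + l0).
    { destruct (cell_S_cases n y c0 l0 E0) as [[Hc Ec]|[[Hc Ec]|[[Hc Ec]|[Hc Ec]]]];
        rewrite Ec in E; injection E as <- <-; lra. }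
    specialize (IH c0 l0 Hy eq_refl Hz0).
    destruct (cell_S_cases n y c0 l0 E0) as [[Hc Ec]|[[Hc Ec]|[[Hc Ec]|[Hc Ec]]]];
      rewrite Ec in E; injection E as <- <-;
      destruct (cell_S_cases n z c0 l0 IH) as [[Hd Ed]|[[Hd Ed]|[[Hd Ed]|[Hd Ed]]]];
      first [exact Ed | exfalso; lra].
Qed.

Lemma cell_one n c l : cell n 1 = (c, l) -> c + l = 1 /\ 0 < l.
Proof.
  revert c l; induction n as [|n IH]; intros c l E.
  - injection E as <- <-. lra.
  - destruct (cell n 1) as [c0 l0] eqn:E0.
    specialize (IH c0 l0 eq_refl).
    destruct (cell_S_cases n 1 c0 l0 E0) as [[Hc Ec]|[[Hc Ec]|[[Hc Ec]|[Hc Ec]]]];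
      rewrite Ec in E; injection E as <- <-; lra.
Qed.

(* From generation [n] on, [F^lambda_k] no longer changes at these points. *)
Definition grid_point (n : nat) (z : R) : Prop :=
  z = 1 \/ (0 <= z < 1 /\ fst (cell n z) = z).

Lemma grid_point_S n z : grid_point n z -> grid_point (S n) z.
Proof.
  intros [H1|[Hz H]]; [now left|right; split; [exact Hz|]].
  destruct (cell n z) as [c l] eqn:E; simpl in H; subst c.
  pose proof (cell_spec n z z l Hz E).
  rewrite (cell_S n z z l E). destruct Rlt_dec; [reflexivity|lra].
Qed.

Lemma grid_point_left n y c l : 0 <= y < 1 -> cell n y = (c, l) -> grid_point n c.
Proof.
  intros Hy E. pose proof (cell_spec n y c l Hy E). right; split; [lra|].
  rewrite (cell_constant n y c c l Hy E) by lra. reflexivity.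
Qed.

Lemma grid_point_S_nodes n y c l : 0 <= y < 1 -> cell n y = (c, l) ->
  grid_point (S n) (c + l/3) /\ grid_point (S n) (c + l/2) /\
  grid_point (S n) (c + 2*l/3).
Proof.
  intros Hy E. pose proof (cell_spec n y c l Hy E).
  assert (Hnode : forall z, c + l/3 <= z < c + l ->
            (z = c + l/3 \/ z = c + l/2 \/ z = c + 2*l/3) -> grid_point (S n) z).
  { intros z Hz Hnz. right; split; [lra|].
    destruct (cell_S_cases n z c l (cell_constant n y z c l Hy E ltac:(lra)))
      as [[Hd Ed]|[[Hd Ed]|[[Hd Ed]|[Hd Ed]]]];
      rewrite Ed; simpl; destruct Hnz as [-> | [-> | ->]]; lra. }
  repeat split; apply Hnode; lra.
Qed.

Lemma grid_point_right n y c l : 0 <= y < 1 -> cell n y = (c, l) ->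
  grid_point n (c + l).
Proof.
  revert c l; induction n as [|n IH]; intros c l Hy E.
  - injection E as <- <-. left; lra.
  - destruct (cell n y) as [c0 l0] eqn:E0.
    destruct (grid_point_S_nodes n y c0 l0 Hy E0) as (G1 & G2 & G3).
    destruct (cell_S_cases n y c0 l0 E0) as [[Hc Ec]|[[Hc Ec]|[[Hc Ec]|[Hc Ec]]]];
      rewrite Ec in E; injection E as <- <-.
    + exact G1.
    + replace (c0 + l0/3 + l0/6) with (c0 + l0/2) by field. exact G2.
    + replace (c0 + l0/2 + l0/6) with (c0 + 2*l0/3) by field. exact G3.
    + replace (c0 + 2*l0/3 + l0/3) with (c0 + l0) by field.
      exact (grid_point_S n _ (IH c0 l0 Hy eq_refl)).
Qed.

Lemma lin_left p q vp vq : lin p q vp vq p = vp.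
Proof. unfold lin. ring. Qed.

Lemma lin_right p q vp vq : p <> q -> lin p q vp vq q = vq.
Proof. intros H. unfold lin. field. lra. Qed.

Lemma lin_between p q vp vq y h : p < q -> p <= y <= q ->
  0 <= vp <= h -> 0 <= vq <= h -> 0 <= lin p q vp vq y <= h.
Proof.
  intros Hpq Hy Hp Hq. unfold lin.
  set (t := (y - p) / (q - p)).
  assert (Ht : t * (q - p) = y - p) by (unfold t; field; lra).
  replace ((vq - vp) / (q - p) * (y - p)) with ((vq - vp) * t) by (unfold t; field; lra).
  assert (0 <= t <= 1) by nra. nra.
Qed.

Section Construction.
Variable lam : R.

Lemma slope_cell n y c l : cell n y = (c, l) ->
  slope lam n y = (Fn lam n (c + l) - Fn lam n c) / l.
Proof. intros E. unfold slope. rewrite E. reflexivity. Qed.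

Lemma Fn_S n z c l : cell n z = (c, l) ->
  Fn lam (S n) z =
    let h := lam * l * sqrt (1 + slope lam n z ^ 2) in
    if Rlt_dec z (c + l/3) then lin c (c + l/3) (Fn lam n c) (Fn lam n (c + l/3)) z
    else if Rlt_dec z (c + l/2) then
      lin (c + l/3) (c + l/2) (Fn lam n (c + l/3)) (Fn lam n (c + l/2) + h) z
    else if Rlt_dec z (c + 2*l/3) then
      lin (c + l/2) (c + 2*l/3) (Fn lam n (c + l/2) + h) (Fn lam n (c + 2*l/3)) z
    else lin (c + 2*l/3) (c + l) (Fn lam n (c + 2*l/3)) (Fn lam n (c + l)) z.
Proof. intros E. rewrite (slope_cell n z c l E). cbn [Fn]. rewrite E. reflexivity. Qed.

Lemma Fn_S_grid n z : grid_point n z -> Fn lam (S n) z = Fn lam n z.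
Proof.
  intros [->|[Hz H]].
  - destruct (cell n 1) as [c l] eqn:E. destruct (cell_one n c l E) as [Hcl Hl].
    rewrite (Fn_S n 1 c l E). cbv zeta.
    do 3 (destruct Rlt_dec; [lra|]).
    rewrite <- Hcl. apply lin_right. lra.
  - destruct (cell n z) as [c l] eqn:E. simpl in H; subst c. pose proof (cell_spec n z z l Hz E).
    rewrite (Fn_S n z z l E). cbv zeta.
    destruct Rlt_dec; [apply lin_left|lra].
Qed.

Lemma Fn_grid n z : grid_point n z -> forall j, Fn lam (j + n) z = Fn lam n z.
Proof.
  intros G j. induction j as [|j IH]; [reflexivity|].
  change (S j + n)%nat with (S (j + n)). rewrite <- IH.
  apply Fn_S_grid. clear IH. induction j as [|j IH]; [exact G|].
  now apply grid_point_S.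
Qed.

Lemma Fn_S_nodes n y c l : 0 <= y < 1 -> cell n y = (c, l) ->
  let h := lam * l * sqrt (1 + slope lam n y ^ 2) in
  Fn lam (S n) c = Fn lam n c /\
  Fn lam (S n) (c + l/3) = Fn lam n (c + l/3) /\
  Fn lam (S n) (c + l/2) = Fn lam n (c + l/2) + h /\
  Fn lam (S n) (c + 2*l/3) = Fn lam n (c + 2*l/3) /\
  Fn lam (S n) (c + l) = Fn lam n (c + l).
Proof.
  intros Hy E h. pose proof (cell_spec n y c l Hy E).
  assert (Hnode : forall z, c <= z < c + l ->
            cell n z = (c, l) /\ slope lam n z = slope lam n y).
  { intros z Hz. pose proof (cell_constant n y z c l Hy E Hz) as Ez.
    split; [exact Ez|now rewrite (slope_cell n z c l Ez), (slope_cell n y c l E)]. }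
  split; [|split; [|split; [|split]]].
  - exact (Fn_S_grid n c (grid_point_left n y c l Hy E)).
  - destruct (Hnode (c + l/3)) as [Ez Hs]; [lra|].
    rewrite (Fn_S n _ c l Ez). cbv zeta.
    destruct Rlt_dec; [lra|]. destruct Rlt_dec; [apply lin_left|lra].
  - destruct (Hnode (c + l/2)) as [Ez Hs]; [lra|].
    rewrite (Fn_S n _ c l Ez), Hs. cbv zeta.
    do 2 (destruct Rlt_dec; [lra|]). destruct Rlt_dec; [apply lin_left|lra].
  - destruct (Hnode (c + 2*l/3)) as [Ez Hs]; [lra|].
    rewrite (Fn_S n _ c l Ez), Hs. cbv zeta.
    do 3 (destruct Rlt_dec; [lra|]). apply lin_left.
  - exact (Fn_S_grid n _ (grid_point_right n y c l Hy E)).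
Qed.

Lemma Fn_affine_on_cell n y c l : 0 <= y < 1 -> cell n y = (c, l) ->
  Fn lam n y = lin c (c + l) (Fn lam n c) (Fn lam n (c + l)) y.
Proof.
  destruct n as [|n]; intros Hy E.
  - injection E as <- <-. unfold lin. simpl. field.
  - destruct (cell n y) as [c0 l0] eqn:E0.
    destruct (Fn_S_nodes n y c0 l0 Hy E0) as (N0 & N1 & N2 & N3 & N4).
    rewrite (Fn_S n y c0 l0 E0), (slope_cell n y c0 l0 E0) in *. cbv zeta in *.
    rewrite (cell_S n y c0 l0 E0) in E.
    destruct Rlt_dec; [injection E as <- <-; now rewrite N0, N1|].
    destruct Rlt_dec.
    { injection E as <- <-. replace (c0 + l0/3 + l0/6) with (c0 + l0/2) by field.
      now rewrite N1, N2. }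
    destruct Rlt_dec.
    { injection E as <- <-. replace (c0 + l0/2 + l0/6) with (c0 + 2*l0/3) by field.
      now rewrite N2, N3. }
    injection E as <- <-. replace (c0 + 2*l0/3 + l0/3) with (c0 + l0) by field.
    now rewrite N3, N4.
Qed.

Lemma Fn_on_cell n y c l z : 0 <= y < 1 -> cell n y = (c, l) -> c <= z <= c + l ->
  Fn lam n z = Fn lam n c + slope lam n y * (z - c).
Proof.
  intros Hy E Hz. pose proof (cell_spec n y c l Hy E).
  rewrite (slope_cell n y c l E).
  destruct (Req_dec z (c + l)) as [->|Hne]; [field; lra|].
  rewrite (Fn_affine_on_cell n z c l ltac:(lra) (cell_constant n y z c l Hy E ltac:(lra))).
  unfold lin. field. lra.
Qed.

Lemma Fn_S_on_child n y c l p l' ep eq : 0 <= y < 1 ->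
  cell n y = (c, l) -> cell (S n) y = (p, l') -> c <= p -> p + l' <= c + l ->
  Fn lam (S n) p = Fn lam n p + ep -> Fn lam (S n) (p + l') = Fn lam n (p + l') + eq ->
  Fn lam (S n) y - Fn lam n y = lin p (p + l') ep eq y /\
  slope lam (S n) y = slope lam n y + (eq - ep) / l'.
Proof.
  intros Hy E E' Hp Hq Ep Eq.
  pose proof (cell_spec n y c l Hy E). pose proof (cell_spec (S n) y p l' Hy E').
  rewrite (slope_cell (S n) y p l' E'), (Fn_affine_on_cell (S n) y p l' Hy E'), Ep, Eq.
  rewrite (Fn_on_cell n y c l y Hy E), (Fn_on_cell n y c l p Hy E),
    (Fn_on_cell n y c l (p + l') Hy E) by lra.
  split; unfold lin; field; lra.
Qed.

Lemma Fn_S_cases n y c l : 0 <= y < 1 -> cell n y = (c, l) ->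
  let m := slope lam n y in let r := sqrt (1 + m ^ 2) in let h := lam * l * r in
  (y < c + l/3 /\ cell (S n) y = (c, l/3) /\
     Fn lam (S n) y - Fn lam n y = lin c (c + l/3) 0 0 y /\ slope lam (S n) y = m) \/
  (c + l/3 <= y < c + l/2 /\ cell (S n) y = (c + l/3, l/6) /\
     Fn lam (S n) y - Fn lam n y = lin (c + l/3) (c + l/2) 0 h y /\
     slope lam (S n) y = m + 6 * lam * r) \/
  (c + l/2 <= y < c + 2*l/3 /\ cell (S n) y = (c + l/2, l/6) /\
     Fn lam (S n) y - Fn lam n y = lin (c + l/2) (c + 2*l/3) h 0 y /\
     slope lam (S n) y = m - 6 * lam * r) \/
  (c + 2*l/3 <= y /\ cell (S n) y = (c + 2*l/3, l/3) /\
     Fn lam (S n) y - Fn lam n y = lin (c + 2*l/3) (c + l) 0 0 y /\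
     slope lam (S n) y = m).
Proof.
  intros Hy E m r h. pose proof (cell_spec n y c l Hy E).
  destruct (Fn_S_nodes n y c l Hy E) as (N0 & N1 & N2 & N3 & N4).
  fold m r in N2. fold h in N2.
  assert (N0' : Fn lam (S n) c = Fn lam n c + 0) by lra.
  assert (N1' : Fn lam (S n) (c + l/3) = Fn lam n (c + l/3) + 0) by lra.
  assert (N3' : Fn lam (S n) (c + 2*l/3) = Fn lam n (c + 2*l/3) + 0) by lra.
  assert (N4' : Fn lam (S n) (c + l) = Fn lam n (c + l) + 0) by lra.
  destruct (cell_S_cases n y c l E) as [[Hc Ec]|[[Hc Ec]|[[Hc Ec]|[Hc Ec]]]].
  - left.
    destruct (Fn_S_on_child n y c l c (l/3) 0 0 Hy E Ec ltac:(lra) ltac:(lra) N0' N1')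
      as [Hd Hs].
    refine (conj _ (conj Ec (conj Hd _))); [lra|rewrite Hs; unfold m; field; lra].
  - right; left.
    replace (c + l/2) with (c + l/3 + l/6) in * by field.
    destruct (Fn_S_on_child n y c l _ _ 0 h Hy E Ec ltac:(lra) ltac:(lra) N1' N2)
      as [Hd Hs].
    refine (conj _ (conj Ec (conj Hd _))); [lra|rewrite Hs; unfold h, r, m; field; lra].
  - right; right; left.
    replace (c + 2*l/3) with (c + l/2 + l/6) in * by field.
    destruct (Fn_S_on_child n y c l _ _ h 0 Hy E Ec ltac:(lra) ltac:(lra) N2 N3')
      as [Hd Hs].
    refine (conj _ (conj Ec (conj Hd _))); [lra|rewrite Hs; unfold h, r, m; field; lra].
  - right; right; right.
    replace (c + l) with (c + 2*l/3 + l/3) in * by field.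
    destruct (Fn_S_on_child n y c l _ _ 0 0 Hy E Ec ltac:(lra) ltac:(lra) N3' N4')
      as [Hd Hs].
    refine (conj _ (conj Ec (conj Hd _))); [lra|rewrite Hs; unfold m; field; lra].
Qed.

Lemma Fn_S_increment n y : 0 <= lam -> 0 <= y < 1 ->
  0 <= Fn lam (S n) y - Fn lam n y <= lam * snd (cell n y) * sqrt (1 + slope lam n y ^ 2).
Proof.
  intros Hlam Hy. destruct (cell n y) as [c l] eqn:E. simpl snd.
  pose proof (cell_spec n y c l Hy E).
  assert (0 <= lam * l * sqrt (1 + slope lam n y ^ 2)).
  { apply Rmult_le_pos; [nra|apply sqrt_pos]. }
  destruct (Fn_S_cases n y c l Hy E) as [(Hc & _ & Hd & _)|[(Hc & _ & Hd & _)|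
    [(Hc & _ & Hd & _)|(Hc & _ & Hd & _)]]]; rewrite Hd; apply lin_between; lra.
Qed.

End Construction.

Lemma sqrt_1_plus_sq_bound m : - sqrt (1 + m ^ 2) < m < sqrt (1 + m ^ 2).
Proof.
  pose proof (sqrt_pos (1 + m ^ 2)). pose proof (sqrt_sqrt (1 + m ^ 2) ltac:(nra)).
  split; nra.
Qed.

Lemma sqrt_1_plus_sq_shift m k : 0 <= k ->
  sqrt (1 + (m + k * sqrt (1 + m ^ 2)) ^ 2) <= (1 + k) * sqrt (1 + m ^ 2) /\
  sqrt (1 + (m - k * sqrt (1 + m ^ 2)) ^ 2) <= (1 + k) * sqrt (1 + m ^ 2).
Proof.
  intros Hk. pose proof (sqrt_1_plus_sq_bound m).
  pose proof (sqrt_pos (1 + m ^ 2)). pose proof (sqrt_sqrt (1 + m ^ 2) ltac:(nra)).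
  set (r := sqrt (1 + m ^ 2)) in *.
  assert (0 <= k * r * (r - m)) by (apply Rmult_le_pos; [apply Rmult_le_pos|]; lra).
  assert (0 <= k * r * (r + m)) by (apply Rmult_le_pos; [apply Rmult_le_pos|]; lra).
  split; rewrite <- (sqrt_pow2 ((1 + k) * r)) by nra; apply sqrt_le_1_alt; nra.
Qed.

Section Convergence.
Variable lam : R.
Let q := (1 + 6 * lam) / 6.

Lemma chord_length_le_pow n y : 1/6 <= lam -> 0 <= y < 1 ->
  snd (cell n y) * sqrt (1 + slope lam n y ^ 2) <= q ^ n.
Proof.
  intros Hlam Hy. induction n as [|n IH].
  - unfold slope. simpl. replace (1 + ((0 - 0) / 1) * (((0 - 0) / 1) * 1)) with 1 by field.
    rewrite sqrt_1. lra.
  - destruct (cell n y) as [c l] eqn:E. simpl snd in IH.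
    pose proof (cell_spec n y c l Hy E).
    set (m := slope lam n y) in *.
    destruct (sqrt_1_plus_sq_shift m (6 * lam) ltac:(lra)) as [Sp Sm].
    pose proof (sqrt_pos (1 + m ^ 2)).
    set (r := sqrt (1 + m ^ 2)) in *.
    assert (0 <= (lam - 1/6) * (l * r)) by (apply Rmult_le_pos; nra).
    assert (q * (l * r) <= q * q ^ n) by (apply Rmult_le_compat_l; [unfold q; lra|exact IH]).
    change (q ^ S n) with (q * q ^ n).
    destruct (Fn_S_cases lam n y c l Hy E) as [(_ & Hc & _ & Hs)|[(_ & Hc & _ & Hs)|
      [(_ & Hc & _ & Hs)|(_ & Hc & _ & Hs)]]];
      rewrite Hc, Hs; simpl snd; fold m r; unfold q in *.
    + nra.
    + assert (l / 6 * sqrt (1 + (m + 6 * lam * r) ^ 2) <= l / 6 * ((1 + 6 * lam) * r))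
        by (apply Rmult_le_compat_l; lra). nra.
    + assert (l / 6 * sqrt (1 + (m - 6 * lam * r) ^ 2) <= l / 6 * ((1 + 6 * lam) * r))
        by (apply Rmult_le_compat_l; lra). nra.
    + nra.
Qed.

Lemma Fn_bounded n y : 1/6 <= lam < 5/6 -> 0 <= y < 1 -> Fn lam n y <= lam / (1 - q).
Proof.
  intros Hlam Hy.
  assert (Hq : 0 < q < 1) by (unfold q; lra).
  assert (Hgeom : Fn lam n y <= lam * (1 - q ^ n) / (1 - q)).
  { induction n as [|n IH].
    - simpl. unfold Rdiv. lra.
    - pose proof (Fn_S_increment lam n y ltac:(lra) Hy) as [_ Hinc].
      pose proof (chord_length_le_pow n y ltac:(lra) Hy) as Hch.
      assert (lam * (snd (cell n y) * sqrt (1 + slope lam n y ^ 2)) <= lam * q ^ n)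
        by (apply Rmult_le_compat_l; lra).
      replace (lam * (1 - q ^ S n) / (1 - q))
        with (lam * (1 - q ^ n) / (1 - q) + lam * q ^ n) by (simpl; field; lra).
      rewrite Rmult_assoc in Hinc. lra. }
  pose proof (pow_le q n ltac:(lra)).
  apply (Rle_trans _ _ _ Hgeom).
  unfold Rdiv. apply Rmult_le_compat_r; [left; apply Rinv_0_lt_compat; lra|nra].
Qed.

End Convergence.

Lemma F_ge_Fn lam n x : 1/6 <= lam < 5/6 -> 0 <= x < 1 -> Fn lam n x <= F lam x.
Proof.
  intros Hlam Hx. set (v := fun k => Fn lam k x).
  assert (Hinc : forall k, v k <= v (S k)).
  { intros k. pose proof (Fn_S_increment lam k x ltac:(lra) Hx). unfold v. lra. }
  assert (Hex : ex_finite_lim_seq v).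
  { apply (ex_finite_lim_seq_incr v (lam / (1 - (1 + 6 * lam) / 6))); [exact Hinc|].
    intros k. now apply Fn_bounded. }
  exact (is_lim_seq_incr_compare v _ (Lim_seq_correct' v Hex) Hinc n).
Qed.

Lemma F_grid lam n z : grid_point n z -> F lam z = Fn lam n z.
Proof.
  intros G. unfold F. rewrite <- (Lim_seq_incr_n _ n).
  rewrite (Lim_seq_ext _ (fun _ => Fn lam n z)) by (intro j; now apply Fn_grid).
  now rewrite Lim_seq_const.
Qed.

Lemma orbit_S n x : let t := Titer n x in t <> 1/3 -> t <> 1/2 -> t <> 2/3 ->
  (t < 1/3 /\ Titer (S n) x = 3 * t /\ a (S n) x = a n x /\
     eps (S n) x = eps n x /\ ell (S n) x = ell n x / 3) \/
  (1/3 < t < 1/2 /\ Titer (S n) x = 6 * t - 2 /\ a (S n) x = a n x + eps n x * ell n x / 3 /\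
     eps (S n) x = eps n x /\ ell (S n) x = ell n x / 6) \/
  (1/2 < t < 2/3 /\ Titer (S n) x = 4 - 6 * t /\
     a (S n) x = a n x + 2 * eps n x * ell n x / 3 /\
     eps (S n) x = - eps n x /\ ell (S n) x = ell n x / 6) \/
  (2/3 < t /\ Titer (S n) x = 3 * t - 2 /\ a (S n) x = a n x + 2 * eps n x * ell n x / 3 /\
     eps (S n) x = eps n x /\ ell (S n) x = ell n x / 3).
Proof.
  intros t H1 H2 H3.
  change (Titer (S n) x) with (T t).
  change (a (S n) x) with (a n x + Ut t * eps n x * ell n x).
  unfold eps, ell, beta2. cbn [beta]. unfold u. fold t.
  assert (Hpow : forall k b, 0 < k -> k ^ b <> 0) by (intros; apply pow_nonzero; lra).
  unfold T, U, Ut.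
  destruct (Rlt_dec t (1/3)); [left|right].
  2: assert (1/3 < t) by (destruct (Rtotal_order t (1/3)) as [|[|]]; tauto);
     destruct (Rlt_dec t (1/2)); [left|right].
  3: assert (1/2 < t) by (destruct (Rtotal_order t (1/2)) as [|[|]]; tauto);
     destruct (Rlt_dec t (2/3)); [left|right].
  4: assert (2/3 < t) by (destruct (Rtotal_order t (2/3)) as [|[|]]; tauto).
  all: cbn; rewrite ?Nat.add_0_r, ?pow_add.
  all: repeat split; try lra; field; repeat split; apply Hpow; lra.
Qed.

Lemma Titer_fixed x n p : T p = p -> Titer n x = p -> forall k, (n <= k)%nat -> Titer k x = p.
Proof.
  intros Hp Hn k Hk. induction Hk as [|k Hk IH]; [exact Hn|]. simpl. now rewrite IH.
Qed.

Lemma T_0 : T 0 = 0.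
Proof. unfold T. destruct Rlt_dec; lra. Qed.

Lemma T_1 : T 1 = 1.
Proof. unfold T. repeat destruct Rlt_dec; lra. Qed.

Lemma inE_of_orbit x n : Titer n x = 0 \/ Titer n x = 1 -> inE x.
Proof.
  intros [H|H]; [left|right]; exists n; intros k Hk; unfold u.
  - rewrite (Titer_fixed x n 0 T_0 H k Hk). unfold U. destruct Rlt_dec; [reflexivity|lra].
  - rewrite (Titer_fixed x n 1 T_1 H k Hk). unfold U.
    repeat destruct Rlt_dec; first [reflexivity|lra].
Qed.

Lemma notE_neq_1 x : ~ inE x -> x <> 1.
Proof. intros HE ->. apply HE, (inE_of_orbit 1 0). now right. Qed.

(* [1/3], [1/2] and [2/3] are sent by [T] to the fixed points [0] and [1]. *)
Lemma notE_avoids_breakpoints x n : ~ inE x ->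
  Titer n x <> 1/3 /\ Titer n x <> 1/2 /\ Titer n x <> 2/3.
Proof.
  intros HE. repeat split; intros H; apply HE, (inE_of_orbit x (S n)); simpl; rewrite H;
    unfold T; repeat destruct Rlt_dec; first [lra | left; lra | right; lra].
Qed.

Section Address.
Variable lam : R.
Hypothesis lam_ge : 1/6 <= lam.
Variable x : R.
Hypothesis x_range : 0 <= x < 1.
Hypothesis x_notE : ~ inE x.

Lemma a_cell_end n c l : cell n x = (c, l) ->
  ell n x = l /\
  ((eps n x = 1 /\ a n x = c /\ Titer n x * l = x - c /\ 0 <= slope lam n x) \/
   (eps n x = -1 /\ a n x = c + l /\ Titer n x * l = c + l - x /\ slope lam n x <= 0)).
Proof.
  revert c l; induction n as [|n IH]; intros c l E.
  - injection E as <- <-. unfold ell, slope. simpl. split; [field|left].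
    repeat split; field_simplify; lra.
  - destruct (cell n x) as [c0 l0] eqn:E0.
    pose proof (cell_spec n x c0 l0 x_range E0).
    destruct (IH c0 l0 eq_refl) as [Hell IH'].
    destruct (notE_avoids_breakpoints x n x_notE) as (B1 & B2 & B3).
    set (m := slope lam n x) in *.
    pose proof (sqrt_1_plus_sq_bound m). pose proof (sqrt_pos (1 + m ^ 2)).
    set (r := sqrt (1 + m ^ 2)) in *.
    assert (0 <= (6 * lam - 1) * r) by (apply Rmult_le_pos; lra).
    destruct (orbit_S n x B1 B2 B3) as [(Ht & HT & Ha & He & Hl)|[(Ht & HT & Ha & He & Hl)|
      [(Ht & HT & Ha & He & Hl)|(Ht & HT & Ha & He & Hl)]]];
    destruct IH' as [(He0 & Ha0 & Ht0 & Hs0)|(He0 & Ha0 & Ht0 & Hs0)];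
    destruct (Fn_S_cases lam n x c0 l0 x_range E0) as [(Hx & Hc & _ & Hs)|[(Hx & Hc & _ & Hs)|
      [(Hx & Hc & _ & Hs)|(Hx & Hc & _ & Hs)]]];
    try (exfalso; nra).
    all: rewrite Hc in E; injection E as <- <-; fold m r in Hs.
    all: split; [rewrite Hl, Hell; field|].
    all: rewrite HT, Ha, He, ?Hell, ?He0, Ha0, Hs.
    all: first [left; repeat split; nra | right; repeat split; nra].
Qed.

End Address.

Lemma Rabs_ge_Rabs_mult D m d : 0 <= m * d <= D -> Rabs D >= Rabs m * Rabs d.
Proof. intros H. rewrite <- Rabs_mult, !Rabs_pos_eq; lra. Qed.

Theorem proposition3p10 :
  forall (lam : R) (n : nat) (x : R),
    1/6 < lam < 5/6 ->
    0 <= x <= 1 ->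
    ~ inE x ->
    Rabs (F lam x - F lam (a n x)) >= Rabs (slope lam n x) * Rabs (x - a n x).
Proof.
  intros lam n x Hlam Hx1 HE.
  assert (Hx : 0 <= x < 1) by (pose proof (notE_neq_1 x HE); lra).
  destruct (cell n x) as [c l] eqn:E.
  pose proof (cell_spec n x c l Hx E).
  pose proof (F_ge_Fn lam n x ltac:(lra) Hx).
  pose proof (Fn_on_cell lam n x c l x Hx E ltac:(lra)).
  apply Rabs_ge_Rabs_mult.
  destruct (a_cell_end lam ltac:(lra) x Hx HE n c l E)
    as [_ [(_ & -> & _ & Hs) | (_ & -> & _ & Hs)]].
  - rewrite (F_grid lam n c (grid_point_left n x c l Hx E)).
    split; nra.
  - rewrite (F_grid lam n (c + l) (grid_point_right n x c l Hx E)).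
    rewrite (Fn_on_cell lam n x c l (c + l) Hx E) by lra.
    split; nra.
Qed.
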